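(* Let $l,k\ge1$ and let $u=\mathrm{sgrad}\,f$, $v=\mathrm{sgrad}\,h$ with $f\in\mathcal Y_l$, $h\in\mathcal Y_k$. Then the operator $B$ on $\mathrm{SVect}(\mathbb S^2)\otimes\mathbb C$ defined by $\langle B(u,v),w\rangle=\langle u,[v,w]\rangle$ for all $w$ satisfies $$k(k+1)\,B(u,v)=-l(l+1)\,B(v,u).$$
   Context: $\mathbb S^2$ with spherical coordinates $(\theta,\phi)$, round metric $d\theta^2+\sin^2\theta\,d\phi^2$, area form $\mu=\sin\theta\,d\theta\wedge d\phi$. $\mathrm{SVect}(\mathbb S^2)$: divergence-free vector fields, with inner product $\langle u,v\rangle=\int_{\mathbb S^2}g(u,v)\mu$ (extended complex-bilinearly or Hermitian; the identity is linear) and Lie bracket $[\cdot,\cdot]$ of vector fields (either sign convention). $\mathrm{sgrad}\,f=\frac1{\sin\theta}(\partial_\phi f\,\partial_\theta-\partial_\theta f\,\partial_\phi)$. $\mathcal Y_l$ is the span of the spherical harmonics $Y^m_l$, $-l\le m\le l$, i.e. the eigenspace $\Delta f=-l(l+1)f$ of the Laplace–Beltrami operator. *)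

From Stdlib Require Import Reals List.
From Coquelicot Require Import Coquelicot.
Open Scope R_scope.

Definition pt := (R * R * R)%type.

Definition sph (t p : R) : pt := (sin t * cos p, sin t * sin p, cos t).
(** an auxiliary rotated chart, regular at the poles of [sph]; used only to
    express smoothness on the whole sphere *)
Definition sph2 (t p : R) : pt := (cos t, sin t * cos p, sin t * sin p).

(** coordinate frame vectors d(sph)/d theta and d(sph)/d phi *)
Definition e_th (t p : R) : pt := (cos t * cos p, cos t * sin p, - sin t).
Definition e_ph (t p : R) : pt := (- (sin t * sin p), sin t * cos p, 0).

Definition d1 (g : R -> R -> R) : R -> R -> R :=
  fun x y => Derive (fun s => g s y) x.
Definition d2 (g : R -> R -> R) : R -> R -> R :=
  fun x y => Derive (fun s => g x s) y.

Fixpoint iter_d (l : list bool) (g : R -> R -> R) : R -> R -> R :=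
  match l with
  | nil => g
  | b :: l' => (if b then d1 else d2) (iter_d l' g)
  end.

Definition smooth2 (g : R -> R -> R) : Prop :=
  forall (l : list bool) (x y : R),
    ex_derive (fun s => iter_d l g s y) x /\
    ex_derive (fun s => iter_d l g x s) y /\
    continuous (fun z : R * R => iter_d l g (fst z) (snd z)) (x, y).

Definition smoothC (g : R -> R -> C) : Prop :=
  smooth2 (fun x y => Re (g x y)) /\ smooth2 (fun x y => Im (g x y)).

Definition dC1 (g : R -> R -> C) : R -> R -> C :=
  fun x y => (d1 (fun a b => Re (g a b)) x y, d1 (fun a b => Im (g a b)) x y).
Definition dC2 (g : R -> R -> C) : R -> R -> C :=
  fun x y => (d2 (fun a b => Re (g a b)) x y, d2 (fun a b => Im (g a b)) x y).

(** a complex function on S^2 is given by F : pt -> C (only its values on the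
    unit sphere matter); it is smooth iff it is smooth in both charts *)
Definition smooth_S2 (F : pt -> C) : Prop :=
  smoothC (fun t p => F (sph t p)) /\ smoothC (fun t p => F (sph2 t p)).

Definition coord (F : pt -> C) : R -> R -> C := fun t p => F (sph t p).

(** complexified vector fields on S^2, as ambient maps pt -> C^3 *)
Definition vfield := pt -> (C * C * C)%type.

Definition cx (X : C * C * C) : C := fst (fst X).
Definition cy (X : C * C * C) : C := snd (fst X).
Definition cz (X : C * C * C) : C := snd X.

Definition dotR (X : C * C * C) (e : pt) : C :=
  (cx X * RtoC (fst (fst e)) + cy X * RtoC (snd (fst e)) + cz X * RtoC (snd e))%C.

Definition tangent (X : vfield) : Prop :=
  forall t p, dotR (X (sph t p)) (sph t p) = RtoC 0.

Definition smooth_vf (X : vfield) : Prop :=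
  smooth_S2 (fun q => cx (X q)) /\ smooth_S2 (fun q => cy (X q)) /\
  smooth_S2 (fun q => cz (X q)).

(** coordinate components (a, b) of X = a d_theta + b d_phi *)
Definition comps (X : vfield) : R -> R -> (C * C)%type :=
  fun t p => (dotR (X (sph t p)) (e_th t p),
              (dotR (X (sph t p)) (e_ph t p) / RtoC (sin t ^ 2))%C).

Definition cfield := R -> R -> (C * C)%type.

Definition ca (V : cfield) : R -> R -> C := fun t p => fst (V t p).
Definition cb (V : cfield) : R -> R -> C := fun t p => snd (V t p).

(** divergence w.r.t. the area form sin(theta) dtheta ^ dphi *)
Definition div (V : cfield) (t p : R) : C :=
  (RtoC (/ sin t) *
   (dC1 (fun a b => RtoC (sin a) * ca V a b)%C t p +
    dC2 (fun a b => RtoC (sin a) * cb V a b)%C t p))%C.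

Definition chart (t : R) : Prop := 0 < t < PI.

Definition in_SVect (X : vfield) : Prop :=
  smooth_vf X /\ tangent X /\
  forall t p, chart t -> div (comps X) t p = RtoC 0.

Definition bracket (V W : cfield) : cfield :=
  fun t p =>
    ((ca V t p * dC1 (ca W) t p + cb V t p * dC2 (ca W) t p
      - (ca W t p * dC1 (ca V) t p + cb W t p * dC2 (ca V) t p))%C,
     (ca V t p * dC1 (cb W) t p + cb V t p * dC2 (cb W) t p
      - (ca W t p * dC1 (cb V) t p + cb W t p * dC2 (cb V) t p))%C).

(** round metric g = dtheta^2 + sin^2 theta dphi^2, complex-bilinear *)
Definition gmet (V W : cfield) (t p : R) : C :=
  (ca V t p * ca W t p + RtoC (sin t ^ 2) * (cb V t p * cb W t p))%C.

Definition int_S2 (h : R -> R -> C) : C :=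
  (RInt (fun p => RInt (fun t => Re (h t p) * sin t) 0 PI) 0 (2 * PI),
   RInt (fun p => RInt (fun t => Im (h t p) * sin t) 0 PI) 0 (2 * PI)).

Definition ip (V W : cfield) : C := int_S2 (gmet V W).

Definition lap (f : R -> R -> C) (t p : R) : C :=
  (RtoC (/ sin t) * dC1 (fun a b => RtoC (sin a) * dC1 f a b)%C t p
   + RtoC (/ (sin t ^ 2)) * dC2 (dC2 f) t p)%C.

Definition sgrad (f : R -> R -> C) : cfield :=
  fun t p => ((RtoC (/ sin t) * dC2 f t p)%C, (- (RtoC (/ sin t) * dC1 f t p))%C).

Definition in_Y (l : nat) (F : pt -> C) : Prop :=
  smooth_S2 F /\
  forall t p, chart t ->
    lap (coord F) t p = (RtoC (- (INR l * (INR l + 1))) * coord F t p)%C.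

Definition is_sgrad (U : vfield) (F : pt -> C) : Prop :=
  in_SVect U /\ forall t p, chart t -> comps U t p = sgrad (coord F) t p.

Definition is_B (U V Bx : vfield) : Prop :=
  in_SVect Bx /\
  forall W, in_SVect W -> ip (comps Bx) (comps W) = ip (comps U) (bracket (comps V) (comps W)).

Definition vscale (c : C) (X : C * C * C) : C * C * C :=
  ((c * cx X, c * cy X), c * cz X)%C.

(* In the orthonormal frame (e_theta, e_phi / sin theta), the relations u = sgrad f,
   v = sgrad h, the vanishing divergence of u, v, w and the eigen-equations
   Delta f = -l(l+1) f, Delta h = -k(k+1) h turn
     k(k+1) sin(theta) g(u, [v,w]) + l(l+1) sin(theta) g(v, [u,w])
   into an exact divergence on the coordinate rectangle.  Its integral vanishes: the
   theta-flux carries a factor sin(theta) and the phi-flux is 2 pi-periodic.  Hence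
   D = k(k+1) B(u,v) + l(l+1) B(v,u) is orthogonal to every w; taking w the complex
   conjugate of D gives  int |D|^2 = 0, so D vanishes on the open chart and, by
   continuity and periodicity, everywhere. *)

From Stdlib Require Import Reals Lra FunctionalExtensionality ZArith Nsatz.
From Coquelicot Require Import Coquelicot.
Open Scope R_scope.

Definition jointly_continuous (g : R -> R -> R) : Prop :=
  forall x y, continuous (fun z : R * R => g (fst z) (snd z)) (x, y).

(* Rather than proving that [smooth2] is closed under the algebraic operations,
   we close it syntactically, together with the trigonometric functions of one
   coordinate, and show that this class still has all partial derivatives. *)
Inductive regular : (R -> R -> R) -> Prop :=
| regular_smooth g : smooth2 g -> regular g
| regular_const (a : R) : regular (fun _ _ => a)
| regular_sin1 : regular (fun x _ => sin x)
| regular_cos1 : regular (fun x _ => cos x)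
| regular_sin2 : regular (fun _ y => sin y)
| regular_cos2 : regular (fun _ y => cos y)
| regular_plus g h : regular g -> regular h -> regular (fun x y => g x y + h x y)
| regular_mult g h : regular g -> regular h -> regular (fun x y => g x y * h x y)
| regular_opp g : regular g -> regular (fun x y => - g x y).

Definition has_regular_partials (g : R -> R -> R) : Prop :=
  (forall x y, ex_derive (fun s => g s y) x) /\
  (forall x y, ex_derive (fun s => g x s) y) /\
  jointly_continuous g /\ regular (d1 g) /\ regular (d2 g).

Lemma fun2_ext {T} (g h : R -> R -> T) : (forall x y, g x y = h x y) -> g = h.
Proof. intros E; do 2 (apply functional_extensionality; intro); apply E. Qed.

Lemma regular_ext g h : regular g -> (forall x y, g x y = h x y) -> regular h.
Proof. intros Hg E; rewrite <- (fun2_ext g h E); exact Hg. Qed.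

Lemma iter_d_app l m g : iter_d l (iter_d m g) = iter_d (l ++ m) g.
Proof. induction l as [|b l IH]; simpl; [|rewrite IH]; reflexivity. Qed.

Lemma smooth2_d1 g : smooth2 g -> smooth2 (d1 g).
Proof. intros H l; change (d1 g) with (iter_d (true :: nil) g); rewrite iter_d_app; apply H. Qed.

Lemma smooth2_d2 g : smooth2 g -> smooth2 (d2 g).
Proof. intros H l; change (d2 g) with (iter_d (false :: nil) g); rewrite iter_d_app; apply H. Qed.

Lemma smooth2_regular_partials g : smooth2 g -> has_regular_partials g.
Proof.
  intros Hg; repeat split; try intros x y; try apply (Hg nil x y);
    apply regular_smooth; [apply smooth2_d1 | apply smooth2_d2]; exact Hg.
Qed.

Lemma fun1_regular_partials (h : R -> R) :
  (forall x, ex_derive h x) -> regular (fun x _ => Derive h x) ->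
  has_regular_partials (fun x _ => h x).
Proof.
  intros Hh Hd; repeat split.
  - intros x _; apply Hh.
  - intros; apply ex_derive_const.
  - intros x y; apply (continuous_comp (fun z : R * R => fst z) h);
      [apply continuous_fst | apply (ex_derive_continuous (K:=R_AbsRing) (V:=R_NormedModule)), Hh].
  - exact Hd.
  - apply (regular_ext (fun _ _ => 0)); [apply regular_const | intros; symmetry; unfold d1, d2; apply Derive_const].
Qed.

Lemma fun2_regular_partials (h : R -> R) :
  (forall y, ex_derive h y) -> regular (fun _ y => Derive h y) ->
  has_regular_partials (fun _ y => h y).
Proof.
  intros Hh Hd; repeat split.
  - intros; apply ex_derive_const.
  - intros _ y; apply Hh.
  - intros x y; apply (continuous_comp (fun z : R * R => snd z) h);
      [apply continuous_snd | apply (ex_derive_continuous (K:=R_AbsRing) (V:=R_NormedModule)), Hh].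
  - apply (regular_ext (fun _ _ => 0)); [apply regular_const | intros; symmetry; unfold d1, d2; apply Derive_const].
  - exact Hd.
Qed.

Lemma Derive_sin_eq : Derive sin = cos.
Proof. apply functional_extensionality; intros; apply is_derive_unique, is_derive_sin. Qed.

Lemma Derive_cos_eq : Derive cos = fun x => - sin x.
Proof. apply functional_extensionality; intros; apply is_derive_unique, is_derive_cos. Qed.

Section PartialsClosure.
Variables g h : R -> R -> R.
Hypotheses (Hg : has_regular_partials g) (Hh : has_regular_partials h).

Lemma has_regular_partials_plus : has_regular_partials (fun x y => g x y + h x y).
Proof.
  destruct Hg as [G1 [G2 [G3 [G4 G5]]]], Hh as [H1 [H2 [H3 [H4 H5]]]]; repeat split.
  - intros x y; apply (ex_derive_plus (fun s => g s y) (fun s => h s y)); auto.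
  - intros x y; apply (ex_derive_plus (fun s => g x s) (fun s => h x s)); auto.
  - intros x y; apply (continuous_plus (fun z : R * R => g (fst z) (snd z))
                                       (fun z : R * R => h (fst z) (snd z))); auto.
  - apply (regular_ext (fun x y => d1 g x y + d1 h x y)); [apply regular_plus; auto|].
    intros x y; symmetry; apply (Derive_plus (fun s => g s y) (fun s => h s y)); auto.
  - apply (regular_ext (fun x y => d2 g x y + d2 h x y)); [apply regular_plus; auto|].
    intros x y; symmetry; apply (Derive_plus (fun s => g x s) (fun s => h x s)); auto.
Qed.

Hypotheses (Kg : regular g) (Kh : regular h).

Lemma has_regular_partials_mult : has_regular_partials (fun x y => g x y * h x y).
Proof.
  destruct Hg as [G1 [G2 [G3 [G4 G5]]]], Hh as [H1 [H2 [H3 [H4 H5]]]]; repeat split.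
  - intros x y; apply (ex_derive_mult (fun s => g s y) (fun s => h s y)); auto.
  - intros x y; apply (ex_derive_mult (fun s => g x s) (fun s => h x s)); auto.
  - intros x y; apply (continuous_mult (fun z : R * R => g (fst z) (snd z))
                                       (fun z : R * R => h (fst z) (snd z))); auto.
  - apply (regular_ext (fun x y => d1 g x y * h x y + g x y * d1 h x y));
      [apply regular_plus; apply regular_mult; auto|].
    intros x y; symmetry; apply (Derive_mult (fun s => g s y) (fun s => h s y)); auto.
  - apply (regular_ext (fun x y => d2 g x y * h x y + g x y * d2 h x y));
      [apply regular_plus; apply regular_mult; auto|].
    intros x y; symmetry; apply (Derive_mult (fun s => g x s) (fun s => h x s)); auto.
Qed.

End PartialsClosure.

Lemma has_regular_partials_opp g : has_regular_partials g ->
  has_regular_partials (fun x y => - g x y).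
Proof.
  intros [G1 [G2 [G3 [G4 G5]]]]; repeat split.
  - intros x y; apply (ex_derive_opp (fun s => g s y)); auto.
  - intros x y; apply (ex_derive_opp (fun s => g x s)); auto.
  - intros x y; apply (continuous_opp (fun z : R * R => g (fst z) (snd z))); auto.
  - apply (regular_ext (fun x y => - d1 g x y)); [apply regular_opp; auto|].
    intros x y; symmetry; apply (Derive_opp (fun s => g s y)).
  - apply (regular_ext (fun x y => - d2 g x y)); [apply regular_opp; auto|].
    intros x y; symmetry; apply (Derive_opp (fun s => g x s)).
Qed.

Lemma regular_partials g : regular g -> has_regular_partials g.
Proof.
  induction 1.
  - apply smooth2_regular_partials; assumption.
  - apply (fun1_regular_partials (fun _ => a)); [intros; apply ex_derive_const|].
    apply (regular_ext (fun _ _ => 0)); [apply regular_const | intros; symmetry; apply Derive_const].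
  - apply fun1_regular_partials; [intros; eexists; apply is_derive_sin|].
    rewrite Derive_sin_eq; apply regular_cos1.
  - apply fun1_regular_partials; [intros; eexists; apply is_derive_cos|].
    rewrite Derive_cos_eq; apply regular_opp, regular_sin1.
  - apply fun2_regular_partials; [intros; eexists; apply is_derive_sin|].
    rewrite Derive_sin_eq; apply regular_cos2.
  - apply fun2_regular_partials; [intros; eexists; apply is_derive_cos|].
    rewrite Derive_cos_eq; apply regular_opp, regular_sin2.
  - apply has_regular_partials_plus; assumption.
  - apply has_regular_partials_mult; assumption.
  - apply has_regular_partials_opp; assumption.
Qed.

Lemma regular_ex_derive1 g x y : regular g -> ex_derive (fun s => g s y) x.
Proof. intros H; apply (proj1 (regular_partials g H)). Qed.
Lemma regular_ex_derive2 g x y : regular g -> ex_derive (fun s => g x s) y.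
Proof. intros H; apply (proj1 (proj2 (regular_partials g H))). Qed.
Lemma regular_continuous g : regular g -> jointly_continuous g.
Proof. intros H; apply (proj1 (proj2 (proj2 (regular_partials g H)))). Qed.
Lemma regular_d1 g : regular g -> regular (d1 g).
Proof. intros H; apply (proj1 (proj2 (proj2 (proj2 (regular_partials g H))))). Qed.
Lemma regular_d2 g : regular g -> regular (d2 g).
Proof. intros H; apply (proj2 (proj2 (proj2 (proj2 (regular_partials g H))))). Qed.

Lemma regular_minus g h : regular g -> regular h -> regular (fun x y => g x y - h x y).
Proof. intros; apply regular_plus, regular_opp; assumption. Qed.

Lemma regular_continuous1 g y x : regular g -> continuous (fun s => g s y) x.
Proof.
  intros H; apply (continuous_comp_2 (fun s => s) (fun _ => y) g);
    [apply continuous_id | apply continuous_const | apply regular_continuous, H].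
Qed.
Lemma regular_continuous2 g x y : regular g -> continuous (fun s => g x s) y.
Proof.
  intros H; apply (continuous_comp_2 (fun _ => x) (fun s => s) g);
    [apply continuous_const | apply continuous_id | apply regular_continuous, H].
Qed.

Section RealPartials.
Variables (g h : R -> R -> R) (x y : R).
Hypotheses (Hg : regular g) (Hh : regular h).

Lemma d1_plus : d1 (fun a b => g a b + h a b) x y = d1 g x y + d1 h x y.
Proof. apply (Derive_plus (fun s => g s y) (fun s => h s y)); apply regular_ex_derive1; auto. Qed.
Lemma d2_plus : d2 (fun a b => g a b + h a b) x y = d2 g x y + d2 h x y.
Proof. apply (Derive_plus (fun s => g x s) (fun s => h x s)); apply regular_ex_derive2; auto. Qed.
Lemma d1_minus : d1 (fun a b => g a b - h a b) x y = d1 g x y - d1 h x y.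
Proof. apply (Derive_minus (fun s => g s y) (fun s => h s y)); apply regular_ex_derive1; auto. Qed.
Lemma d2_minus : d2 (fun a b => g a b - h a b) x y = d2 g x y - d2 h x y.
Proof. apply (Derive_minus (fun s => g x s) (fun s => h x s)); apply regular_ex_derive2; auto. Qed.
Lemma d1_mult : d1 (fun a b => g a b * h a b) x y = d1 g x y * h x y + g x y * d1 h x y.
Proof. apply (Derive_mult (fun s => g s y) (fun s => h s y)); apply regular_ex_derive1; auto. Qed.
Lemma d2_mult : d2 (fun a b => g a b * h a b) x y = d2 g x y * h x y + g x y * d2 h x y.
Proof. apply (Derive_mult (fun s => g x s) (fun s => h x s)); apply regular_ex_derive2; auto. Qed.

End RealPartials.

Lemma d1_opp g x y : d1 (fun a b => - g a b) x y = - d1 g x y.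
Proof. apply (Derive_opp (fun s => g s y)). Qed.
Lemma d2_opp g x y : d2 (fun a b => - g a b) x y = - d2 g x y.
Proof. apply (Derive_opp (fun s => g x s)). Qed.
Lemma d1_const a x y : d1 (fun _ _ => a) x y = 0.
Proof. unfold d1, d2; apply Derive_const. Qed.
Lemma d2_const a x y : d2 (fun _ _ => a) x y = 0.
Proof. unfold d1, d2; apply Derive_const. Qed.

Lemma Re_add (a b : C) : Re (a + b)%C = Re a + Re b. Proof. reflexivity. Qed.
Lemma Im_add (a b : C) : Im (a + b)%C = Im a + Im b. Proof. reflexivity. Qed.
Lemma Re_mul (a b : C) : Re (a * b)%C = Re a * Re b - Im a * Im b. Proof. reflexivity. Qed.
Lemma Im_mul (a b : C) : Im (a * b)%C = Re a * Im b + Im a * Re b. Proof. reflexivity. Qed.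
Lemma Re_opp (a : C) : Re (- a)%C = - Re a. Proof. reflexivity. Qed.
Lemma Im_opp (a : C) : Im (- a)%C = - Im a. Proof. reflexivity. Qed.
Lemma Re_sub (a b : C) : Re (a - b)%C = Re a - Re b. Proof. reflexivity. Qed.
Lemma Im_sub (a b : C) : Im (a - b)%C = Im a - Im b. Proof. reflexivity. Qed.
Lemma Re_RtoC (r : R) : Re (RtoC r) = r. Proof. reflexivity. Qed.
Lemma Im_RtoC (r : R) : Im (RtoC r) = 0. Proof. reflexivity. Qed.
Lemma Re_pair (x y : R) : Re (x, y) = x. Proof. reflexivity. Qed.
Lemma Im_pair (x y : R) : Im (x, y) = y. Proof. reflexivity. Qed.
Lemma Re_conj (a : C) : Re (Cconj a) = Re a. Proof. reflexivity. Qed.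
Lemma Im_conj (a : C) : Im (Cconj a) = - Im a. Proof. reflexivity. Qed.

#[global] Hint Rewrite Re_add Im_add Re_mul Im_mul Re_opp Im_opp Re_sub Im_sub
  Re_RtoC Im_RtoC Re_pair Im_pair Re_conj Im_conj : complex_parts.

Ltac complex_eq :=
  apply injective_projections; change (@fst R R) with Re; change (@snd R R) with Im;
  autorewrite with complex_parts.

Definition regularC (g : R -> R -> C) : Prop :=
  regular (fun x y => Re (g x y)) /\ regular (fun x y => Im (g x y)).

Lemma regularC_ext g h : regularC g -> (forall x y, g x y = h x y) -> regularC h.
Proof. intros Hg E; rewrite <- (fun2_ext g h E); exact Hg. Qed.

Lemma regularC_plus g h : regularC g -> regularC h -> regularC (fun x y => (g x y + h x y)%C).
Proof. intros [A B] [C D]; split; apply regular_plus; auto. Qed.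
Lemma regularC_opp g : regularC g -> regularC (fun x y => (- g x y)%C).
Proof. intros [A B]; split; apply regular_opp; auto. Qed.
Lemma regularC_minus g h : regularC g -> regularC h -> regularC (fun x y => (g x y - h x y)%C).
Proof. intros [A B] [C D]; split; apply regular_minus; auto. Qed.
Lemma regularC_mult g h : regularC g -> regularC h -> regularC (fun x y => (g x y * h x y)%C).
Proof.
  intros [A B] [C D]; split;
    [apply regular_minus | apply regular_plus]; apply regular_mult; auto.
Qed.
Lemma regularC_RtoC r : regular r -> regularC (fun x y => RtoC (r x y)).
Proof. intros; split; [assumption | exact (regular_const 0)]. Qed.
Lemma regularC_const (c : C) : regularC (fun _ _ => c).
Proof. split; apply regular_const. Qed.
Lemma regularC_conj g : regularC g -> regularC (fun x y => Cconj (g x y)).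
Proof. intros [A B]; split; [|apply regular_opp]; assumption. Qed.
Lemma regularC_dC1 g : regularC g -> regularC (dC1 g).
Proof. intros [A B]; split; apply regular_d1; auto. Qed.
Lemma regularC_dC2 g : regularC g -> regularC (dC2 g).
Proof. intros [A B]; split; apply regular_d2; auto. Qed.

Ltac regular_auto := repeat match goal with
  | |- regularC (fun x y => (@?a x y + @?b x y)%C) => apply (regularC_plus a b)
  | |- regularC (fun x y => (@?a x y - @?b x y)%C) => apply (regularC_minus a b)
  | |- regularC (fun x y => (@?a x y * @?b x y)%C) => apply (regularC_mult a b)
  | |- regularC (fun x y => (- @?a x y)%C) => apply (regularC_opp a)
  | |- regularC (fun x y => Cconj (@?a x y)) => apply (regularC_conj a)
  | |- regularC (fun x y => RtoC (@?a x y)) => apply (regularC_RtoC a)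
  | |- regularC (fun _ _ => _) => apply regularC_const
  | |- regularC (fun x y => dC1 _ x y) => apply regularC_dC1
  | |- regularC (fun x y => dC2 _ x y) => apply regularC_dC2
  | |- regularC (dC1 _) => apply regularC_dC1
  | |- regularC (dC2 _) => apply regularC_dC2
  | |- regularC _ => assumption
  | |- regular (fun x y => @?a x y + @?b x y) => apply (regular_plus a b)
  | |- regular (fun x y => @?a x y - @?b x y) => apply (regular_minus a b)
  | |- regular (fun x y => @?a x y * @?b x y) => apply (regular_mult a b)
  | |- regular (fun x y => - @?a x y) => apply (regular_opp a)
  | |- regular (fun x _ => sin x) => apply regular_sin1
  | |- regular (fun x _ => cos x) => apply regular_cos1
  | |- regular (fun _ y => sin y) => apply regular_sin2
  | |- regular (fun _ y => cos y) => apply regular_cos2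
  | |- regular (fun _ _ => _) => apply regular_const
  | |- regular (fun x y => d1 _ x y) => apply regular_d1
  | |- regular (fun x y => d2 _ x y) => apply regular_d2
  | |- regular (d1 _) => apply regular_d1
  | |- regular (d2 _) => apply regular_d2
  | |- regular _ => assumption
  end.

Section ComplexPartials.
Variables (g h : R -> R -> C) (x y : R).
Hypotheses (Hg : regularC g) (Hh : regularC h).

Lemma dC1_plus : dC1 (fun a b => (g a b + h a b)%C) x y = (dC1 g x y + dC1 h x y)%C.
Proof. destruct Hg, Hh; unfold dC1; complex_eq; apply d1_plus; assumption. Qed.
Lemma dC2_plus : dC2 (fun a b => (g a b + h a b)%C) x y = (dC2 g x y + dC2 h x y)%C.
Proof. destruct Hg, Hh; unfold dC2; complex_eq; apply d2_plus; assumption. Qed.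
Lemma dC1_minus : dC1 (fun a b => (g a b - h a b)%C) x y = (dC1 g x y - dC1 h x y)%C.
Proof. destruct Hg, Hh; unfold dC1; complex_eq; apply d1_minus; assumption. Qed.
Lemma dC2_minus : dC2 (fun a b => (g a b - h a b)%C) x y = (dC2 g x y - dC2 h x y)%C.
Proof. destruct Hg, Hh; unfold dC2; complex_eq; apply d2_minus; assumption. Qed.

Lemma dC1_mult :
  dC1 (fun a b => (g a b * h a b)%C) x y = (dC1 g x y * h x y + g x y * dC1 h x y)%C.
Proof.
  destruct Hg, Hh; unfold dC1; complex_eq; unfold Re, Im in *; cbn [Cmult fst snd].
  - rewrite (d1_minus (fun a b => fst (g a b) * fst (h a b)) (fun a b => snd (g a b) * snd (h a b)))
      by regular_auto.
    rewrite (d1_mult (fun a b => fst (g a b)) (fun a b => fst (h a b))),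
      (d1_mult (fun a b => snd (g a b)) (fun a b => snd (h a b))) by assumption; ring.
  - rewrite (d1_plus (fun a b => fst (g a b) * snd (h a b)) (fun a b => snd (g a b) * fst (h a b)))
      by regular_auto.
    rewrite (d1_mult (fun a b => fst (g a b)) (fun a b => snd (h a b))),
      (d1_mult (fun a b => snd (g a b)) (fun a b => fst (h a b))) by assumption; ring.
Qed.
Lemma dC2_mult :
  dC2 (fun a b => (g a b * h a b)%C) x y = (dC2 g x y * h x y + g x y * dC2 h x y)%C.
Proof.
  destruct Hg, Hh; unfold dC2; complex_eq; unfold Re, Im in *; cbn [Cmult fst snd].
  - rewrite (d2_minus (fun a b => fst (g a b) * fst (h a b)) (fun a b => snd (g a b) * snd (h a b)))
      by regular_auto.
    rewrite (d2_mult (fun a b => fst (g a b)) (fun a b => fst (h a b))),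
      (d2_mult (fun a b => snd (g a b)) (fun a b => snd (h a b))) by assumption; ring.
  - rewrite (d2_plus (fun a b => fst (g a b) * snd (h a b)) (fun a b => snd (g a b) * fst (h a b)))
      by regular_auto.
    rewrite (d2_mult (fun a b => fst (g a b)) (fun a b => snd (h a b))),
      (d2_mult (fun a b => snd (g a b)) (fun a b => fst (h a b))) by assumption; ring.
Qed.

End ComplexPartials.

Lemma dC1_opp g x y : dC1 (fun a b => (- g a b)%C) x y = (- dC1 g x y)%C.
Proof. unfold dC1; complex_eq; apply d1_opp. Qed.
Lemma dC2_opp g x y : dC2 (fun a b => (- g a b)%C) x y = (- dC2 g x y)%C.
Proof. unfold dC2; complex_eq; apply d2_opp. Qed.
Lemma dC1_conj g x y : dC1 (fun a b => Cconj (g a b)) x y = Cconj (dC1 g x y).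
Proof. unfold dC1; complex_eq; [reflexivity | apply d1_opp]. Qed.
Lemma dC2_conj g x y : dC2 (fun a b => Cconj (g a b)) x y = Cconj (dC2 g x y).
Proof. unfold dC2; complex_eq; [reflexivity | apply d2_opp]. Qed.
Lemma dC1_RtoC r x y : dC1 (fun a b => RtoC (r a b)) x y = RtoC (d1 r x y).
Proof. unfold dC1; complex_eq; [reflexivity | exact (d1_const 0 x y)]. Qed.
Lemma dC2_RtoC r x y : dC2 (fun a b => RtoC (r a b)) x y = RtoC (d2 r x y).
Proof. unfold dC2; complex_eq; [reflexivity | exact (d2_const 0 x y)]. Qed.
Lemma dC1_const (c : C) x y : dC1 (fun _ _ => c) x y = RtoC 0.
Proof. unfold dC1; complex_eq; apply d1_const. Qed.
Lemma dC2_const (c : C) x y : dC2 (fun _ _ => c) x y = RtoC 0.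
Proof. unfold dC2; complex_eq; apply d2_const. Qed.
Lemma dC1_sin x y : dC1 (fun a _ => RtoC (sin a)) x y = RtoC (cos x).
Proof. rewrite (dC1_RtoC (fun a _ => sin a)); apply f_equal, (is_derive_unique (fun a => sin a)), is_derive_sin. Qed.
Lemma dC2_sin x y : dC2 (fun a _ => RtoC (sin a)) x y = RtoC 0.
Proof. rewrite (dC2_RtoC (fun a _ => sin a)); exact (f_equal RtoC (d2_const (sin x) x y)). Qed.

Lemma RtoC_neq0 x : x <> 0 -> RtoC x <> RtoC 0.
Proof. intros H E; apply H, (f_equal Re E). Qed.

Lemma sin_chart_neq0 t : chart t -> sin t <> 0.
Proof. intros [H1 H2]; apply Rgt_not_eq, sin_gt_0; assumption. Qed.

Lemma RtoC_sin_chart_neq0 t : chart t -> RtoC (sin t) <> RtoC 0.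
Proof. intros; apply RtoC_neq0, sin_chart_neq0; assumption. Qed.

Lemma chart_open t : chart t -> locally t chart.
Proof.
  intros [H1 H2]; assert (He : 0 < Rmin t (PI - t)) by (apply Rmin_pos; lra).
  exists (mkposreal _ He); intros a Ha.
  unfold ball in Ha; simpl in Ha; unfold AbsRing_ball, abs, minus, plus, opp in Ha; simpl in Ha.
  pose proof (Rmin_l t (PI - t)); pose proof (Rmin_r t (PI - t)).
  apply Rabs_lt_between in Ha; split; lra.
Qed.

Lemma dC1_chart_ext g h t p : chart t -> (forall a, chart a -> g a p = h a p) ->
  dC1 g t p = dC1 h t p.
Proof.
  intros Ht H; unfold dC1, d1; apply injective_projections; simpl; apply Derive_ext_loc;
    (apply (filter_imp chart); [intros a Ha; rewrite H; auto | apply chart_open, Ht]).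
Qed.

Lemma dC2_ext_at g h t p : (forall b, g t b = h t b) -> dC2 g t p = dC2 h t p.
Proof.
  intros H; unfold dC2, d2; apply injective_projections; simpl; apply Derive_ext;
    intros b; rewrite H; reflexivity.
Qed.

Lemma dC2_mult_RtoC1 g (r : R -> R) x y :
  dC2 (fun a b => (g a b * RtoC (r a))%C) x y = (dC2 g x y * RtoC (r x))%C.
Proof.
  unfold dC2, d2; complex_eq;
    [ rewrite (Derive_ext _ (fun s => r x * Re (g x s)))
    | rewrite (Derive_ext _ (fun s => r x * Im (g x s))) ];
    try (intros; autorewrite with complex_parts; ring);
    rewrite Derive_scal; ring.
Qed.

(* The components of a field in the orthonormal frame (e_th, e_ph / sin t);
   unlike [comps X] they stay regular at the poles. *)
Definition e_phi_unit (p : R) : pt := (- sin p, cos p, 0).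
Definition theta_comp (X : vfield) (t p : R) : C := dotR (X (sph t p)) (e_th t p).
Definition phi_comp (X : vfield) (t p : R) : C := dotR (X (sph t p)) (e_phi_unit p).
Definition coord_x (X : vfield) (t p : R) : C := cx (X (sph t p)).
Definition coord_y (X : vfield) (t p : R) : C := cy (X (sph t p)).
Definition coord_z (X : vfield) (t p : R) : C := cz (X (sph t p)).

Lemma regularC_coord F : smooth_S2 F -> regularC (coord F).
Proof. intros [[A B] _]; split; apply regular_smooth; assumption. Qed.

Section SmoothField.
Variable X : vfield.
Hypothesis HX : smooth_vf X.

Lemma regularC_coord_x : regularC (coord_x X).
Proof. apply (regularC_coord (fun q => cx (X q))), HX. Qed.
Lemma regularC_coord_y : regularC (coord_y X).
Proof. apply (regularC_coord (fun q => cy (X q))), HX. Qed.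
Lemma regularC_coord_z : regularC (coord_z X).
Proof. apply (regularC_coord (fun q => cz (X q))), HX. Qed.

Lemma regularC_theta_comp : regularC (theta_comp X).
Proof.
  pose proof regularC_coord_x; pose proof regularC_coord_y; pose proof regularC_coord_z.
  apply (regularC_ext (fun t p => (coord_x X t p * RtoC (cos t * cos p)
    + coord_y X t p * RtoC (cos t * sin p) + coord_z X t p * RtoC (- sin t))%C));
    [regular_auto | reflexivity].
Qed.

Lemma regularC_phi_comp : regularC (phi_comp X).
Proof.
  pose proof regularC_coord_x; pose proof regularC_coord_y; pose proof regularC_coord_z.
  apply (regularC_ext (fun t p => (coord_x X t p * RtoC (- sin p)
    + coord_y X t p * RtoC (cos p) + coord_z X t p * RtoC 0)%C));
    [regular_auto | reflexivity].
Qed.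

End SmoothField.

Lemma dotR_e_ph X t p : dotR (X (sph t p)) (e_ph t p) = (RtoC (sin t) * phi_comp X t p)%C.
Proof. unfold phi_comp, dotR, e_ph, e_phi_unit; simpl; complex_eq; ring. Qed.

Lemma ca_comps X : ca (comps X) = theta_comp X.
Proof. reflexivity. Qed.

Lemma cb_comps X t p : sin t <> 0 -> cb (comps X) t p = (phi_comp X t p * RtoC (/ sin t))%C.
Proof.
  intros H; unfold cb, comps; cbn [snd]; rewrite dotR_e_ph, RtoC_pow, RtoC_inv by assumption.
  field; apply RtoC_neq0, H.
Qed.

Lemma dC1_cb_comps X t p : smooth_vf X -> chart t ->
  dC1 (cb (comps X)) t p =
  (dC1 (phi_comp X) t p * RtoC (/ sin t) + phi_comp X t p * RtoC (- cos t / sin t ^ 2))%C.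
Proof.
  intros HX Ht; pose proof (sin_chart_neq0 t Ht) as Hs.
  rewrite (dC1_chart_ext _ (fun a b => (phi_comp X a b * RtoC (/ sin a))%C)) by
    (first [assumption | intros; apply cb_comps, sin_chart_neq0; assumption]).
  destruct (regularC_phi_comp X HX) as [A B].
  assert (Hinv : is_derive (fun a => / sin a) t (- cos t / sin t ^ 2))
    by (auto_derive; [assumption | field; assumption]).
  assert (Dinv : Derive (fun a => / sin a) t = - cos t / sin t ^ 2) by apply (is_derive_unique _ _ _ Hinv).
  unfold dC1, d1; complex_eq; unfold Re, Im in *.
  - rewrite (Derive_ext _ (fun a => fst (phi_comp X a p) * / sin a)) by (intros; simpl; ring).
    rewrite Derive_mult, Dinv; [simpl; ring | | eexists; exact Hinv].
    apply (regular_ex_derive1 (fun a b => fst (phi_comp X a b))), A.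
  - rewrite (Derive_ext _ (fun a => snd (phi_comp X a p) * / sin a)) by (intros; simpl; ring).
    rewrite Derive_mult, Dinv; [simpl; ring | | eexists; exact Hinv].
    apply (regular_ex_derive1 (fun a b => snd (phi_comp X a b))), B.
Qed.

Lemma dC2_cb_comps X t p : chart t ->
  dC2 (cb (comps X)) t p = (dC2 (phi_comp X) t p * RtoC (/ sin t))%C.
Proof.
  intros Ht; rewrite (dC2_ext_at _ (fun a b => (phi_comp X a b * RtoC (/ sin a))%C)).
  - apply (dC2_mult_RtoC1 _ (fun a => / sin a)).
  - intros; apply cb_comps, sin_chart_neq0, Ht.
Qed.

Section SymplecticGradient.
Variables (U : vfield) (F : pt -> C) (t p : R).
Hypotheses (Ht : chart t) (HUF : comps U t p = sgrad (coord F) t p).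

Lemma sgrad_dC2 : dC2 (coord F) t p = (RtoC (sin t) * theta_comp U t p)%C.
Proof.
  apply (f_equal fst) in HUF; unfold comps, sgrad in HUF; cbn [fst snd] in HUF.
  change (dotR (U (sph t p)) (e_th t p)) with (theta_comp U t p) in HUF.
  rewrite HUF, RtoC_inv by apply sin_chart_neq0, Ht.
  field; apply RtoC_sin_chart_neq0, Ht.
Qed.

Lemma sgrad_dC1 : dC1 (coord F) t p = (- phi_comp U t p)%C.
Proof.
  pose proof (RtoC_sin_chart_neq0 t Ht) as Hs.
  apply (f_equal snd) in HUF; unfold comps, sgrad in HUF; cbn [fst snd] in HUF.
  rewrite dotR_e_ph, RtoC_inv, RtoC_pow in HUF by apply sin_chart_neq0, Ht.
  replace (dC1 (coord F) t p)
    with (- (RtoC (sin t) * (- (/ RtoC (sin t) * dC1 (coord F) t p))))%C by (field; exact Hs).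
  rewrite <- HUF; field; exact Hs.
Qed.

End SymplecticGradient.

Definition div_density (X : vfield) (t p : R) : C :=
  (RtoC (cos t) * theta_comp X t p + RtoC (sin t) * dC1 (theta_comp X) t p
   + dC2 (phi_comp X) t p)%C.

Lemma div_comps X t p : smooth_vf X -> chart t ->
  div (comps X) t p = (RtoC (/ sin t) * div_density X t p)%C.
Proof.
  intros HX Ht; unfold div, div_density; rewrite ca_comps.
  rewrite (dC1_mult (fun a _ => RtoC (sin a)) (theta_comp X)), dC1_sin
    by (pose proof (regularC_theta_comp X HX); regular_auto).
  rewrite (dC2_ext_at _ (phi_comp X)); [reflexivity|].
  intros b; rewrite cb_comps, RtoC_inv by apply sin_chart_neq0, Ht.
  field; apply RtoC_sin_chart_neq0, Ht.
Qed.

Lemma div_density_eq0 X t p : smooth_vf X -> chart t ->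
  div (comps X) t p = RtoC 0 -> div_density X t p = RtoC 0.
Proof.
  intros HX Ht H; rewrite div_comps, RtoC_inv in H by (try apply sin_chart_neq0; assumption).
  pose proof (RtoC_sin_chart_neq0 t Ht) as Hs.
  replace (div_density X t p) with (RtoC (sin t) * (/ RtoC (sin t) * div_density X t p))%C
    by (field; exact Hs).
  rewrite H; ring.
Qed.

Lemma dC2_phi_comp_div_free X t p : smooth_vf X -> chart t -> div (comps X) t p = RtoC 0 ->
  dC2 (phi_comp X) t p =
  (- (RtoC (cos t) * theta_comp X t p + RtoC (sin t) * dC1 (theta_comp X) t p))%C.
Proof.
  intros HX Ht H; pose proof (div_density_eq0 X t p HX Ht H) as E; unfold div_density in E.
  replace (dC2 (phi_comp X) t p) with
    ((RtoC (cos t) * theta_comp X t p + RtoC (sin t) * dC1 (theta_comp X) t p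
      + dC2 (phi_comp X) t p) - (RtoC (cos t) * theta_comp X t p
      + RtoC (sin t) * dC1 (theta_comp X) t p))%C by ring.
  rewrite E; ring.
Qed.

Lemma dC2_theta_comp_eigen (U : vfield) (F : pt -> C) lam t p : smooth_vf U -> chart t ->
  (forall t p, chart t -> comps U t p = sgrad (coord F) t p) ->
  lap (coord F) t p = (RtoC (- lam) * coord F t p)%C ->
  dC2 (theta_comp U) t p = (RtoC (cos t) * phi_comp U t p + RtoC (sin t) * dC1 (phi_comp U) t p
                            - RtoC lam * RtoC (sin t) * coord F t p)%C.
Proof.
  intros HU Ht HS HL; unfold lap in HL.
  pose proof (sin_chart_neq0 t Ht) as Hs0; pose proof (RtoC_sin_chart_neq0 t Ht) as Hs.
  pose proof (regularC_theta_comp U HU); pose proof (regularC_phi_comp U HU).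
  rewrite (dC1_chart_ext _ (fun a b => (- (RtoC (sin a) * phi_comp U a b))%C)) in HL
    by (first [assumption | intros a Ha; rewrite (sgrad_dC1 U F a p Ha (HS a p Ha)); ring]).
  rewrite dC1_opp, (dC1_mult (fun a _ => RtoC (sin a)) (phi_comp U)), dC1_sin in HL
    by regular_auto.
  rewrite (dC2_ext_at (dC2 (coord F)) (fun a b => (RtoC (sin a) * theta_comp U a b)%C)) in HL
    by (intros b; apply (sgrad_dC2 U F t b Ht (HS t b Ht))).
  rewrite (dC2_mult (fun a _ => RtoC (sin a)) (theta_comp U)), dC2_sin in HL by regular_auto.
  rewrite RtoC_inv, RtoC_inv, RtoC_pow in HL by (try apply pow_nonzero; assumption).
  replace (RtoC lam * RtoC (sin t) * coord F t p)%C
    with (- (RtoC (sin t) * (RtoC (- lam) * coord F t p)))%C by (rewrite RtoC_opp; ring).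
  rewrite <- HL; field; exact Hs.
Qed.

Definition bracket_density (U1 U2 V1 V2 W1 W2 : R -> R -> C) (t p : R) : C :=
 (U1 t p * (RtoC (sin t) * V1 t p * dC1 W1 t p + V2 t p * dC2 W1 t p
            - RtoC (sin t) * W1 t p * dC1 V1 t p - W2 t p * dC2 V1 t p)
 + U2 t p * (RtoC (sin t) * V1 t p * dC1 W2 t p - RtoC (cos t) * V1 t p * W2 t p
            + V2 t p * dC2 W2 t p - RtoC (sin t) * W1 t p * dC1 V2 t p
            + RtoC (cos t) * W1 t p * V2 t p - W2 t p * dC2 V2 t p))%C.

Lemma ca_bracket V W t p : ca (bracket V W) t p =
  (ca V t p * dC1 (ca W) t p + cb V t p * dC2 (ca W) t p
   - (ca W t p * dC1 (ca V) t p + cb W t p * dC2 (ca V) t p))%C.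
Proof. reflexivity. Qed.

Lemma cb_bracket V W t p : cb (bracket V W) t p =
  (ca V t p * dC1 (cb W) t p + cb V t p * dC2 (cb W) t p
   - (ca W t p * dC1 (cb V) t p + cb W t p * dC2 (cb V) t p))%C.
Proof. reflexivity. Qed.

Lemma gmet_bracket_comps U V W t p : smooth_vf V -> smooth_vf W -> chart t ->
  (gmet (comps U) (bracket (comps V) (comps W)) t p * RtoC (sin t))%C =
  bracket_density (theta_comp U) (phi_comp U) (theta_comp V) (phi_comp V)
    (theta_comp W) (phi_comp W) t p.
Proof.
  intros HV HW Ht; pose proof (sin_chart_neq0 t Ht) as Hs.
  unfold gmet, bracket_density; rewrite ca_bracket, cb_bracket.
  rewrite !dC1_cb_comps, !dC2_cb_comps, !cb_comps, !ca_comps by assumption.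
  rewrite ?RtoC_div, ?RtoC_inv, ?RtoC_opp, ?RtoC_pow by (try apply pow_nonzero; assumption).
  field; apply RtoC_neq0, Hs.
Qed.

Lemma gmet_comps X Y t p : chart t ->
  gmet (comps X) (comps Y) t p = (theta_comp X t p * theta_comp Y t p + phi_comp X t p * phi_comp Y t p)%C.
Proof.
  intros Ht; pose proof (sin_chart_neq0 t Ht) as Hs; unfold gmet.
  rewrite !cb_comps, !ca_comps, RtoC_inv, RtoC_pow by assumption.
  field; apply RtoC_neq0, Hs.
Qed.

(* [bracket_density] is sin(theta) g(U, [V, W]) in frame components; the two fluxes below
   exhibit the eigen-combination of densities as a divergence. *)
Definition flux_theta (U1 U2 V1 V2 W1 W2 f h : R -> R -> C) (lam mu : R) (t p : R) : C :=
  (RtoC (sin t) * (RtoC mu * ((W2 t p * V1 t p - W1 t p * V2 t p) * U2 t p)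
    + RtoC lam * ((W2 t p * U1 t p - W1 t p * U2 t p) * V2 t p)
    - RtoC (lam * mu) * (f t p * h t p * W1 t p)))%C.
Definition flux_phi (U1 U2 V1 V2 W1 W2 f h : R -> R -> C) (lam mu : R) (t p : R) : C :=
  (- (RtoC mu * ((W2 t p * V1 t p - W1 t p * V2 t p) * U1 t p))
    - RtoC lam * ((W2 t p * U1 t p - W1 t p * U2 t p) * V1 t p)
    - RtoC (lam * mu) * (f t p * h t p * W2 t p))%C.

Lemma bracket_density_divergence (U1 U2 V1 V2 W1 W2 f h : R -> R -> C) (lam mu t p : R) :
  regularC U1 -> regularC U2 -> regularC V1 -> regularC V2 -> regularC W1 -> regularC W2 ->
  regularC f -> regularC h ->
  dC1 f t p = (- U2 t p)%C -> dC2 f t p = (RtoC (sin t) * U1 t p)%C ->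
  dC1 h t p = (- V2 t p)%C -> dC2 h t p = (RtoC (sin t) * V1 t p)%C ->
  dC2 U2 t p = (- (RtoC (cos t) * U1 t p + RtoC (sin t) * dC1 U1 t p))%C ->
  dC2 V2 t p = (- (RtoC (cos t) * V1 t p + RtoC (sin t) * dC1 V1 t p))%C ->
  dC2 W2 t p = (- (RtoC (cos t) * W1 t p + RtoC (sin t) * dC1 W1 t p))%C ->
  dC2 U1 t p = (RtoC (cos t) * U2 t p + RtoC (sin t) * dC1 U2 t p
                - RtoC lam * RtoC (sin t) * f t p)%C ->
  dC2 V1 t p = (RtoC (cos t) * V2 t p + RtoC (sin t) * dC1 V2 t p
                - RtoC mu * RtoC (sin t) * h t p)%C ->
  (RtoC mu * bracket_density U1 U2 V1 V2 W1 W2 t p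
   + RtoC lam * bracket_density V1 V2 U1 U2 W1 W2 t p)%C =
  (dC1 (flux_theta U1 U2 V1 V2 W1 W2 f h lam mu) t p
   + dC2 (flux_phi U1 U2 V1 V2 W1 W2 f h lam mu) t p)%C.
Proof.
  intros KU1 KU2 KV1 KV2 KW1 KW2 Kf Kh Hf1 Hf2 Hh1 Hh2 HdU HdV HdW HlU HlV.
  unfold flux_theta, flux_phi.
  repeat first
    [ rewrite dC1_sin | rewrite dC2_sin | rewrite dC1_opp | rewrite dC2_opp
    | rewrite dC1_const | rewrite dC2_const
    | rewrite dC1_plus by regular_auto | rewrite dC1_minus by regular_auto
    | rewrite dC1_mult by regular_auto | rewrite dC2_plus by regular_auto
    | rewrite dC2_minus by regular_auto | rewrite dC2_mult by regular_auto ].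
  unfold bracket_density; rewrite Hf1, Hf2, Hh1, Hh2, HdU, HdV, HdW, HlU, HlV, RtoC_mult.
  ring.
Qed.

Lemma regular_ex_RInt G p a b : regular G -> ex_RInt (fun t => G t p) a b.
Proof.
  intros H; apply (ex_RInt_continuous (V := R_CompleteNormedModule)); intros;
    apply regular_continuous1, H.
Qed.

Lemma is_derive_RInt_regular F a b p : regular F ->
  is_derive (fun p => RInt (fun t => F t p) a b) p (RInt (fun t => d2 F t p) a b).
Proof.
  intros HF; apply (is_derive_RInt_param (fun u t => F t u) a b p).
  - exists (mkposreal 1 Rlt_0_1); intros y _ t _; apply regular_ex_derive2, HF.
  - intros t _; apply continuity_2d_pt_filterlim.
    apply (continuous_comp_2 (fun z : R * R => snd z) (fun z : R * R => fst z)
             (fun v u => d2 F v u) (p, t)); simpl;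
      [apply continuous_snd | apply continuous_fst | apply regular_continuous, regular_d2, HF].
  - exists (mkposreal 1 Rlt_0_1); intros y _; apply regular_ex_RInt, HF.
Qed.

Lemma continuous_RInt_regular F a b p : regular F ->
  continuous (fun p => RInt (fun t => F t p) a b) p.
Proof.
  intros HF; apply (ex_derive_continuous (K := R_AbsRing) (V := R_NormedModule)).
  eexists; apply is_derive_RInt_regular, HF.
Qed.

Definition rect_integral (g : R -> R -> R) : R :=
  RInt (fun p => RInt (fun t => g t p) 0 PI) 0 (2 * PI).

Lemma rect_integral_chart_ext G Q : (forall t p, chart t -> G t p = Q t p) ->
  rect_integral G = rect_integral Q.
Proof.
  intros E; unfold rect_integral; apply RInt_ext; intros p _; apply RInt_ext; intros t Ht.
  pose proof PI_RGT_0; rewrite Rmin_left, Rmax_right in Ht by lra.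
  apply E; split; apply Ht.
Qed.

Lemma RInt_lin (f g : R -> R) (m l a b : R) : ex_RInt f a b -> ex_RInt g a b ->
  m * RInt f a b + l * RInt g a b = RInt (fun x => m * f x + l * g x) a b.
Proof.
  intros Hf Hg.
  rewrite (RInt_plus (V := R_CompleteNormedModule) (fun x => m * f x) (fun x => l * g x))
    by (apply (ex_RInt_scal (V := R_CompleteNormedModule)); assumption).
  rewrite !(RInt_scal (V := R_CompleteNormedModule)) by assumption; reflexivity.
Qed.

Lemma rect_integral_lin Q1 Q2 m l : regular Q1 -> regular Q2 ->
  m * rect_integral Q1 + l * rect_integral Q2 =
  rect_integral (fun t p => m * Q1 t p + l * Q2 t p).
Proof.
  intros K1 K2; unfold rect_integral.
  rewrite RInt_lin
    by (apply (ex_RInt_continuous (V := R_CompleteNormedModule)); intros;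
        apply continuous_RInt_regular; assumption).
  apply RInt_ext; intros p _; apply RInt_lin; apply regular_ex_RInt; assumption.
Qed.

Lemma rect_integral_divergence A B : regular A -> regular B ->
  (forall p, A 0 p = A PI p) -> (forall t, B t 0 = B t (2 * PI)) ->
  rect_integral (fun t p => d1 A t p + d2 B t p) = 0.
Proof.
  intros HA HB EA EB; unfold rect_integral.
  assert (Inner : forall p, RInt (fun t => d1 A t p + d2 B t p) 0 PI
                            = RInt (fun t => d2 B t p) 0 PI).
  { intros p.
    rewrite (RInt_plus (V := R_CompleteNormedModule) (fun t => d1 A t p) (fun t => d2 B t p))
      by (apply regular_ex_RInt; regular_auto).
    unfold d1 at 1; rewrite (RInt_Derive (fun t => A t p)), EA.
    - change (A PI p - A PI p + RInt (fun t => d2 B t p) 0 PI = RInt (fun t => d2 B t p) 0 PI).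
      ring.
    - intros; apply regular_ex_derive1, HA.
    - intros; apply (regular_continuous1 (d1 A)); regular_auto. }
  rewrite (RInt_ext _ (fun p => RInt (fun t => d2 B t p) 0 PI)) by (intros; apply Inner).
  assert (DerB : forall p, Derive (fun p => RInt (fun t => B t p) 0 PI) p
                           = RInt (fun t => d2 B t p) 0 PI)
    by (intros; apply is_derive_unique, is_derive_RInt_regular, HB).
  rewrite (RInt_ext _ (Derive (fun p => RInt (fun t => B t p) 0 PI))) by (intros; rewrite DerB; reflexivity).
  rewrite RInt_Derive.
  - rewrite (RInt_ext (fun t => B t (2 * PI)) (fun t => B t 0)) by (intros; rewrite EB; reflexivity).
    change (RInt (fun t => B t 0) 0 PI - RInt (fun t => B t 0) 0 PI = 0); ring.
  - intros; eexists; apply is_derive_RInt_regular, HB.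
  - intros x _; rewrite (functional_extensionality _ _ DerB).
    apply continuous_RInt_regular; regular_auto.
Qed.

Lemma sph_2PI t : sph t (2 * PI) = sph t 0.
Proof. unfold sph; rewrite cos_2PI, sin_2PI, cos_0, sin_0; reflexivity. Qed.

Lemma theta_comp_2PI X t : theta_comp X t (2 * PI) = theta_comp X t 0.
Proof. unfold theta_comp, e_th; rewrite sph_2PI, cos_2PI, sin_2PI, cos_0, sin_0; reflexivity. Qed.
Lemma phi_comp_2PI X t : phi_comp X t (2 * PI) = phi_comp X t 0.
Proof. unfold phi_comp, e_phi_unit; rewrite sph_2PI, cos_2PI, sin_2PI, cos_0, sin_0; reflexivity. Qed.
Lemma coord_2PI F t : coord F t (2 * PI) = coord F t 0.
Proof. unfold coord; rewrite sph_2PI; reflexivity. Qed.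

Section ComplexPart.
Variable part : C -> R.
Hypothesis Hpart : part = Re \/ part = Im.

Lemma part_mult_RtoC z r : part (z * RtoC r)%C = part z * r.
Proof. destruct Hpart; subst; autorewrite with complex_parts; ring. Qed.
Lemma part_lin z1 z2 m l : part (RtoC m * z1 + RtoC l * z2)%C = m * part z1 + l * part z2.
Proof. destruct Hpart; subst; autorewrite with complex_parts; ring. Qed.
Lemma part_dC1 g x y : part (dC1 g x y) = d1 (fun a b => part (g a b)) x y.
Proof. destruct Hpart; subst; reflexivity. Qed.
Lemma part_dC2 g x y : part (dC2 g x y) = d2 (fun a b => part (g a b)) x y.
Proof. destruct Hpart; subst; reflexivity. Qed.
Lemma part_add z1 z2 : part (z1 + z2)%C = part z1 + part z2.
Proof. destruct Hpart; subst; reflexivity. Qed.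
Lemma regular_part g : regularC g -> regular (fun a b => part (g a b)).
Proof. intros [A B]; destruct Hpart; subst; assumption. Qed.

End ComplexPart.

Lemma ip_bracket_eigen_part (l k : nat) (f h : pt -> C) (u v W : vfield) (part : C -> R) :
  part = Re \/ part = Im -> in_Y l f -> in_Y k h -> is_sgrad u f -> is_sgrad v h -> in_SVect W ->
  INR k * (INR k + 1) *
    rect_integral (fun t p => part (gmet (comps u) (bracket (comps v) (comps W)) t p) * sin t)
  + INR l * (INR l + 1) *
    rect_integral (fun t p => part (gmet (comps v) (bracket (comps u) (comps W)) t p) * sin t)
  = 0.
Proof.
  intros Hpart [Sf Lf] [Sh Lh] [[Su [_ Du]] Gu] [[Sv [_ Dv]] Gv] [SW [_ DW]].
  set (lam := INR l * (INR l + 1)); set (mu := INR k * (INR k + 1)).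
  pose proof (regularC_coord f Sf); pose proof (regularC_coord h Sh).
  pose proof (regularC_theta_comp u Su); pose proof (regularC_phi_comp u Su).
  pose proof (regularC_theta_comp v Sv); pose proof (regularC_phi_comp v Sv).
  pose proof (regularC_theta_comp W SW); pose proof (regularC_phi_comp W SW).
  rewrite (rect_integral_chart_ext _ (fun t p => part (bracket_density (theta_comp u)
      (phi_comp u) (theta_comp v) (phi_comp v) (theta_comp W) (phi_comp W) t p))),
    (rect_integral_chart_ext
       (fun t p => part (gmet (comps v) (bracket (comps u) (comps W)) t p) * sin t)
       (fun t p => part (bracket_density (theta_comp v)
      (phi_comp v) (theta_comp u) (phi_comp u) (theta_comp W) (phi_comp W) t p))),
    rect_integral_lin.
  2,3: apply regular_part; [assumption | unfold bracket_density; regular_auto].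
  2,3: intros t p Ht; rewrite <- gmet_bracket_comps, part_mult_RtoC by assumption; reflexivity.
  rewrite (rect_integral_chart_ext _ (fun t p =>
      d1 (fun a b => part (flux_theta (theta_comp u) (phi_comp u) (theta_comp v) (phi_comp v)
                             (theta_comp W) (phi_comp W) (coord f) (coord h) lam mu a b)) t p
    + d2 (fun a b => part (flux_phi (theta_comp u) (phi_comp u) (theta_comp v) (phi_comp v)
                             (theta_comp W) (phi_comp W) (coord f) (coord h) lam mu a b)) t p)).
  - apply rect_integral_divergence.
    + apply regular_part; [assumption | unfold flux_theta; regular_auto].
    + apply regular_part; [assumption | unfold flux_phi; regular_auto].
    + intros p; unfold flux_theta; rewrite sin_0, sin_PI, !Cmult_0_l; reflexivity.
    + intros t; unfold flux_phi; rewrite !theta_comp_2PI, !phi_comp_2PI, !coord_2PI; reflexivity.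
  - intros t p Ht; rewrite <- part_dC1, <- part_dC2, <- part_add, <- part_lin by assumption.
    f_equal; apply bracket_density_divergence; try assumption.
    + apply (sgrad_dC1 u f t p Ht (Gu t p Ht)).
    + apply (sgrad_dC2 u f t p Ht (Gu t p Ht)).
    + apply (sgrad_dC1 v h t p Ht (Gv t p Ht)).
    + apply (sgrad_dC2 v h t p Ht (Gv t p Ht)).
    + apply (dC2_phi_comp_div_free u t p Su Ht (Du t p Ht)).
    + apply (dC2_phi_comp_div_free v t p Sv Ht (Dv t p Ht)).
    + apply (dC2_phi_comp_div_free W t p SW Ht (DW t p Ht)).
    + apply (dC2_theta_comp_eigen u f lam t p Su Ht Gu (Lf t p Ht)).
    + apply (dC2_theta_comp_eigen v h mu t p Sv Ht Gv (Lh t p Ht)).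
Qed.

Lemma ip_bracket_eigen (l k : nat) (f h : pt -> C) (u v W : vfield) :
  in_Y l f -> in_Y k h -> is_sgrad u f -> is_sgrad v h -> in_SVect W ->
  (RtoC (INR k * (INR k + 1)) * ip (comps u) (bracket (comps v) (comps W)) +
   RtoC (INR l * (INR l + 1)) * ip (comps v) (bracket (comps u) (comps W)))%C = RtoC 0.
Proof.
  intros Hf Hh Hu Hv HW.
  pose proof (ip_bracket_eigen_part l k f h u v W Re (or_introl eq_refl) Hf Hh Hu Hv HW).
  pose proof (ip_bracket_eigen_part l k f h u v W Im (or_intror eq_refl) Hf Hh Hu Hv HW).
  unfold ip, int_S2; complex_eq; unfold rect_integral, Re, Im in *; cbn [fst snd]; lra.
Qed.

Definition vlin (m l : R) (X Y : vfield) : vfield := fun q =>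
  ((RtoC m * cx (X q) + RtoC l * cx (Y q), RtoC m * cy (X q) + RtoC l * cy (Y q)),
   RtoC m * cz (X q) + RtoC l * cz (Y q))%C.

Definition vconj (X : vfield) : vfield := fun q =>
  ((Cconj (cx (X q)), Cconj (cy (X q))), Cconj (cz (X q))).

Lemma iter_d_lin L a b g1 g2 : smooth2 g1 -> smooth2 g2 ->
  iter_d L (fun x y => a * g1 x y + b * g2 x y) =
  (fun x y => a * iter_d L g1 x y + b * iter_d L g2 x y).
Proof.
  intros H1 H2; induction L as [|c L IH]; [reflexivity|]; simpl; rewrite IH.
  apply fun2_ext; intros x y; destruct c; unfold d1, d2.
  - rewrite (Derive_plus (fun s => a * iter_d L g1 s y) (fun s => b * iter_d L g2 s y)),
      !Derive_scal by (apply ex_derive_scal; first [apply (H1 L x y) | apply (H2 L x y)]).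
    reflexivity.
  - rewrite (Derive_plus (fun s => a * iter_d L g1 x s) (fun s => b * iter_d L g2 x s)),
      !Derive_scal by (apply ex_derive_scal; first [apply (H1 L x y) | apply (H2 L x y)]).
    reflexivity.
Qed.

Lemma smooth2_lin a b g1 g2 : smooth2 g1 -> smooth2 g2 ->
  smooth2 (fun x y => a * g1 x y + b * g2 x y).
Proof.
  intros H1 H2 L x y; rewrite iter_d_lin by assumption.
  destruct (H1 L x y) as [A1 [B1 C1]], (H2 L x y) as [A2 [B2 C2]]; repeat split.
  - apply (ex_derive_plus (fun s => a * iter_d L g1 s y) (fun s => b * iter_d L g2 s y));
      apply ex_derive_scal; assumption.
  - apply (ex_derive_plus (fun s => a * iter_d L g1 x s) (fun s => b * iter_d L g2 x s));
      apply ex_derive_scal; assumption.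
  - apply (continuous_plus (fun z : R * R => a * iter_d L g1 (fst z) (snd z))
                           (fun z : R * R => b * iter_d L g2 (fst z) (snd z)));
      apply (continuous_scal_r (K := R_AbsRing) (V := R_NormedModule)); assumption.
Qed.

Lemma smooth2_opp g : smooth2 g -> smooth2 (fun x y => - g x y).
Proof.
  intros H; rewrite <- (fun2_ext (fun x y => -1 * g x y + 0 * g x y)) by (intros; ring).
  apply smooth2_lin; assumption.
Qed.

Lemma smoothC_lin m l F G : smoothC F -> smoothC G ->
  smoothC (fun x y => RtoC m * F x y + RtoC l * G x y)%C.
Proof.
  intros [A1 B1] [A2 B2]; split.
  - rewrite <- (fun2_ext (fun x y => m * Re (F x y) + l * Re (G x y)))
      by (intros; autorewrite with complex_parts; ring).
    apply smooth2_lin; assumption.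
  - rewrite <- (fun2_ext (fun x y => m * Im (F x y) + l * Im (G x y)))
      by (intros; autorewrite with complex_parts; ring).
    apply smooth2_lin; assumption.
Qed.

Lemma smoothC_conj F : smoothC F -> smoothC (fun x y => Cconj (F x y)).
Proof. intros [A B]; split; [exact A | apply (smooth2_opp (fun x y => Im (F x y))), B]. Qed.

Lemma smooth_S2_lin m l F G : smooth_S2 F -> smooth_S2 G ->
  smooth_S2 (fun q => RtoC m * F q + RtoC l * G q)%C.
Proof.
  intros [A1 B1] [A2 B2]; split;
    [ apply (smoothC_lin m l (fun t p => F (sph t p)) (fun t p => G (sph t p)))
    | apply (smoothC_lin m l (fun t p => F (sph2 t p)) (fun t p => G (sph2 t p))) ]; assumption.
Qed.

Lemma smooth_S2_conj F : smooth_S2 F -> smooth_S2 (fun q => Cconj (F q)).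
Proof.
  intros [A B]; split;
    [ apply (smoothC_conj (fun t p => F (sph t p)))
    | apply (smoothC_conj (fun t p => F (sph2 t p))) ]; assumption.
Qed.

Lemma smooth_vf_vlin m l X Y : smooth_vf X -> smooth_vf Y -> smooth_vf (vlin m l X Y).
Proof.
  intros [A1 [B1 C1]] [A2 [B2 C2]]; split; [|split];
    apply (smooth_S2_lin m l (fun q => _ (X q)) (fun q => _ (Y q))); assumption.
Qed.

Lemma smooth_vf_vconj X : smooth_vf X -> smooth_vf (vconj X).
Proof.
  intros [A [B C]]; split; [|split]; apply (smooth_S2_conj (fun q => _ (X q))); assumption.
Qed.

Lemma dotR_vlin m l X Y q e :
  dotR (vlin m l X Y q) e = (RtoC m * dotR (X q) e + RtoC l * dotR (Y q) e)%C.
Proof. unfold dotR, vlin, cx, cy, cz; cbn [fst snd]; complex_eq; ring. Qed.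

Lemma dotR_vconj X q e : dotR (vconj X q) e = Cconj (dotR (X q) e).
Proof. unfold dotR, vconj, cx, cy, cz; cbn [fst snd]; complex_eq; ring. Qed.

Lemma theta_comp_vlin m l X Y t p :
  theta_comp (vlin m l X Y) t p = (RtoC m * theta_comp X t p + RtoC l * theta_comp Y t p)%C.
Proof. apply dotR_vlin. Qed.
Lemma phi_comp_vlin m l X Y t p :
  phi_comp (vlin m l X Y) t p = (RtoC m * phi_comp X t p + RtoC l * phi_comp Y t p)%C.
Proof. apply dotR_vlin. Qed.
Lemma theta_comp_vconj X t p : theta_comp (vconj X) t p = Cconj (theta_comp X t p).
Proof. apply dotR_vconj. Qed.
Lemma phi_comp_vconj X t p : phi_comp (vconj X) t p = Cconj (phi_comp X t p).
Proof. apply dotR_vconj. Qed.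

Lemma div_density_vlin m l X Y t p : smooth_vf X -> smooth_vf Y ->
  div_density (vlin m l X Y) t p =
  (RtoC m * div_density X t p + RtoC l * div_density Y t p)%C.
Proof.
  intros HX HY; unfold div_density.
  pose proof (regularC_theta_comp X HX); pose proof (regularC_theta_comp Y HY).
  pose proof (regularC_phi_comp X HX); pose proof (regularC_phi_comp Y HY).
  rewrite (fun2_ext (theta_comp (vlin m l X Y)) _ (theta_comp_vlin m l X Y)),
    (fun2_ext (phi_comp (vlin m l X Y)) _ (phi_comp_vlin m l X Y)).
  rewrite dC1_plus, dC2_plus, !dC1_mult, !dC2_mult, !dC1_const, !dC2_const by regular_auto.
  ring.
Qed.

Lemma div_density_vconj X t p :
  div_density (vconj X) t p = Cconj (div_density X t p).
Proof.
  unfold div_density.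
  rewrite (fun2_ext (theta_comp (vconj X)) _ (theta_comp_vconj X)),
    (fun2_ext (phi_comp (vconj X)) _ (phi_comp_vconj X)), dC1_conj, dC2_conj.
  complex_eq; ring.
Qed.

Lemma in_SVect_vlin m l X Y : in_SVect X -> in_SVect Y -> in_SVect (vlin m l X Y).
Proof.
  intros [SX [TX DX]] [SY [TY DY]]; pose proof (smooth_vf_vlin m l X Y SX SY) as S.
  split; [exact S | split].
  - intros t p; rewrite dotR_vlin, TX, TY; ring.
  - intros t p Ht; rewrite div_comps, div_density_vlin, !div_density_eq0 by auto; ring.
Qed.

Lemma in_SVect_vconj X : in_SVect X -> in_SVect (vconj X).
Proof.
  intros [SX [TX DX]]; pose proof (smooth_vf_vconj X SX) as S.
  split; [exact S | split].
  - intros t p; rewrite dotR_vconj, TX; complex_eq; ring.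
  - intros t p Ht; rewrite div_comps, div_density_vconj, div_density_eq0 by auto.
    complex_eq; ring.
Qed.

Lemma RInt_gt_0_of_pos_at (g : R -> R) a b x : (forall y, continuous g y) ->
  (forall y, a <= y <= b -> 0 <= g y) -> a < x < b -> 0 < g x -> 0 < RInt g a b.
Proof.
  intros Hc Hp Hx Hg.
  destruct (proj1 (filterlim_locally g (g x)) (Hc x) (mkposreal (g x / 2) ltac:(simpl; lra)))
    as [d Hd]; simpl in Hd.
  set (e := Rmin d (Rmin (x - a) (b - x)) / 2).
  pose proof (cond_pos d); pose proof (Rmin_l d (Rmin (x - a) (b - x))).
  pose proof (Rmin_r d (Rmin (x - a) (b - x))).
  pose proof (Rmin_l (x - a) (b - x)); pose proof (Rmin_r (x - a) (b - x)).
  assert (He : 0 < e) by (unfold e; apply Rlt_gt, Rdiv_lt_0_compat;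
                          [repeat apply Rmin_pos | ]; lra).
  assert (Ex : forall a b, ex_RInt g a b)
    by (intros; apply (ex_RInt_continuous (V := R_CompleteNormedModule)); auto).
  rewrite <- (RInt_Chasles (V := R_CompleteNormedModule) g a (x - e) b),
    <- (RInt_Chasles (V := R_CompleteNormedModule) g (x - e) (x + e) b) by apply Ex.
  assert (I1 : 0 <= RInt g a (x - e))
    by (apply RInt_ge_0; [unfold e in *; lra | apply Ex | intros; apply Hp; unfold e in *; lra]).
  assert (I3 : 0 <= RInt g (x + e) b)
    by (apply RInt_ge_0; [unfold e in *; lra | apply Ex | intros; apply Hp; unfold e in *; lra]).
  assert (I2 : 0 < RInt g (x - e) (x + e)).
  { apply RInt_gt_0; [lra | | intros; apply Hc].
    intros y Hy; assert (B : ball x d y).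
    { unfold ball; simpl; unfold AbsRing_ball, abs, minus, plus, opp; simpl.
      apply Rabs_def1; unfold e in *; lra. }
    specialize (Hd y B); unfold ball in Hd; simpl in Hd.
    unfold AbsRing_ball, abs, minus, plus, opp in Hd; simpl in Hd.
    apply Rabs_def2 in Hd; lra. }
  change (0 < RInt g a (x - e) + (RInt g (x - e) (x + e) + RInt g (x + e) b)); lra.
Qed.

Lemma rect_integral_nonneg_eq0 (N : R -> R -> R) : regular N -> (forall t p, 0 <= N t p) ->
  rect_integral (fun t p => N t p * sin t) = 0 ->
  forall t p, 0 < t < PI -> 0 < p < 2 * PI -> N t p = 0.
Proof.
  intros KN Hp HI t p Ht Hpp; pose proof PI_RGT_0.
  destruct (Rle_lt_or_eq_dec 0 (N t p) (Hp t p)) as [Hlt | Heq]; [exfalso | auto].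
  assert (KM : regular (fun t p => N t p * sin t)) by regular_auto.
  assert (Inner : 0 < RInt (fun t => N t p * sin t) 0 PI).
  { apply (RInt_gt_0_of_pos_at _ 0 PI t); auto.
    - intros; apply (regular_continuous1 (fun t p => N t p * sin t)), KM.
    - intros; apply Rmult_le_pos; [auto | apply sin_ge_0; lra].
    - apply Rmult_lt_0_compat; [auto | apply sin_gt_0; lra]. }
  assert (0 < rect_integral (fun t p => N t p * sin t)); [|lra].
  apply (RInt_gt_0_of_pos_at _ 0 (2 * PI) p); auto.
  - intros; apply continuous_RInt_regular, KM.
  - intros q _; apply RInt_ge_0; [lra | apply (regular_ex_RInt (fun t p => N t p * sin t)), KM |].
    intros; apply Rmult_le_pos; [auto | apply sin_ge_0; lra].
Qed.

Lemma continuous_eq0_at_bound (g : R -> R) (F : (R -> Prop) -> Prop) x :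
  ProperFilter F -> filter_le F (locally x) -> continuous g x -> F (fun y => g y = 0) -> g x = 0.
Proof.
  intros PF LF Hc H0.
  refine (filterlim_locally_unique (FF := Proper_StrongProper F PF) g (g x) 0
            (filterlim_filter_le_1 g LF Hc) _).
  apply (filterlim_ext_loc (fun _ => 0)); [|apply filterlim_const].
  apply (filter_imp (fun y => g y = 0)); [intros; symmetry; assumption | exact H0].
Qed.

Lemma continuous_eq0_closed (g : R -> R) a b : a < b -> (forall x, continuous g x) ->
  (forall x, a < x < b -> g x = 0) -> forall x, a <= x <= b -> g x = 0.
Proof.
  intros Hab Hc H0 x Hx.
  destruct (Req_dec x a) as [->|Na]; [|destruct (Req_dec x b) as [->|Nb]; [|apply H0; lra]].
  - apply (continuous_eq0_at_bound g (at_right a)); auto.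
    + apply at_right_proper_filter.
    + apply filter_le_within.
    + exists (mkposreal (b - a) ltac:(simpl; lra)); intros y Hy Hay; apply H0.
      unfold ball in Hy; simpl in Hy; unfold AbsRing_ball, abs, minus, plus, opp in Hy; simpl in Hy.
      apply Rabs_lt_between in Hy; lra.
  - apply (continuous_eq0_at_bound g (at_left b)); auto.
    + apply at_left_proper_filter.
    + apply filter_le_within.
    + exists (mkposreal (b - a) ltac:(simpl; lra)); intros y Hy Hyb; apply H0.
      unfold ball in Hy; simpl in Hy; unfold AbsRing_ball, abs, minus, plus, opp in Hy; simpl in Hy.
      apply Rabs_lt_between in Hy; lra.
Qed.

Lemma IZR_pos_INR n : IZR (Z.pos n) = INR (Pos.to_nat n).
Proof. rewrite INR_IZR_INZ, positive_nat_Z; reflexivity. Qed.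

Lemma cos_period_Z x z : cos (x + 2 * IZR z * PI) = cos x.
Proof.
  destruct z as [|n|n].
  - f_equal; simpl; ring.
  - rewrite (IZR_pos_INR n); apply cos_period.
  - rewrite IZR_NEG, (IZR_pos_INR n), <- (cos_period _ (Pos.to_nat n)); f_equal; ring.
Qed.

Lemma sin_period_Z x z : sin (x + 2 * IZR z * PI) = sin x.
Proof.
  destruct z as [|n|n].
  - f_equal; simpl; ring.
  - rewrite (IZR_pos_INR n); apply sin_period.
  - rewrite IZR_NEG, (IZR_pos_INR n), <- (sin_period _ (Pos.to_nat n)); f_equal; ring.
Qed.

Lemma shift_into_period x : exists z, 0 <= x + 2 * IZR z * PI < 2 * PI.
Proof.
  pose proof PI_RGT_0; destruct (archimed (x / (2 * PI))) as [H1 H2].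
  exists (1 - up (x / (2 * PI)))%Z; rewrite minus_IZR.
  assert (E : x = 2 * PI * (x / (2 * PI))) by (field; lra).
  split; rewrite E at 1; nra.
Qed.

Lemma sph_shift_phi t p z : sph t (p + 2 * IZR z * PI) = sph t p.
Proof. unfold sph; rewrite cos_period_Z, sin_period_Z; reflexivity. Qed.
Lemma sph_shift_theta t p z : sph (t + 2 * IZR z * PI) p = sph t p.
Proof. unfold sph; rewrite cos_period_Z, sin_period_Z; reflexivity. Qed.
Lemma sph_flip t p : sph (2 * PI - t) (p + PI) = sph t p.
Proof.
  unfold sph; rewrite neg_sin, neg_cos.
  replace (2 * PI - t) with (- t + 2 * IZR 1 * PI) by (simpl; ring).
  rewrite cos_period_Z, sin_period_Z, sin_neg, cos_neg; f_equal; try f_equal; ring.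
Qed.

Lemma sph_eq0_extend (G : pt -> R) : regular (fun t p => G (sph t p)) ->
  (forall t p, 0 < t < PI -> 0 < p < 2 * PI -> G (sph t p) = 0) ->
  forall t p, G (sph t p) = 0.
Proof.
  intros KG H0; pose proof PI_RGT_0.
  assert (Closed : forall t p, 0 <= t <= PI -> 0 <= p <= 2 * PI -> G (sph t p) = 0).
  { intros t p Ht Hp; apply (continuous_eq0_closed (fun p => G (sph t p)) 0 (2 * PI)); auto;
      [lra | intros; apply (regular_continuous2 (fun t p => G (sph t p))), KG |].
    intros q Hq; apply (continuous_eq0_closed (fun t => G (sph t q)) 0 PI); auto.
    intros; apply (regular_continuous1 (fun t p => G (sph t p))), KG. }
  assert (Band : forall t p, 0 <= t <= PI -> G (sph t p) = 0).
  { intros t p Ht; destruct (shift_into_period p) as [z Hz].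
    rewrite <- (sph_shift_phi t p z); apply Closed; lra. }
  intros t p; destruct (shift_into_period t) as [z Hz]; rewrite <- (sph_shift_theta t p z).
  destruct (Rle_or_lt (t + 2 * IZR z * PI) PI).
  - apply Band; lra.
  - rewrite <- sph_flip; apply Band; lra.
Qed.

Lemma frame_eq0 (a : C * C * C) t p :
  dotR a (e_th t p) = RtoC 0 -> dotR a (e_phi_unit p) = RtoC 0 -> dotR a (sph t p) = RtoC 0 ->
  a = ((RtoC 0, RtoC 0), RtoC 0).
Proof.
  destruct a as [[[x1 x2] [y1 y2]] [z1 z2]].
  unfold dotR, e_th, e_phi_unit, sph, cx, cy, cz; cbn [fst snd]; intros H1 H2 H3.
  pose proof (f_equal Re H1) as A1; pose proof (f_equal Im H1) as B1.
  pose proof (f_equal Re H2) as A2; pose proof (f_equal Im H2) as B2.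
  pose proof (f_equal Re H3) as A3; pose proof (f_equal Im H3) as B3.
  autorewrite with complex_parts in A1, B1, A2, B2, A3, B3.
  pose proof (sin2_cos2 t) as T; pose proof (sin2_cos2 p) as P; unfold Rsqr in T, P.
  unfold RtoC; repeat f_equal; nsatz.
Qed.

Lemma ip_vlin_l m l X Y W : smooth_vf X -> smooth_vf Y -> smooth_vf W ->
  ip (comps (vlin m l X Y)) (comps W) =
  (RtoC m * ip (comps X) (comps W) + RtoC l * ip (comps Y) (comps W))%C.
Proof.
  intros HX HY HW.
  pose proof (regularC_theta_comp X HX); pose proof (regularC_phi_comp X HX).
  pose proof (regularC_theta_comp Y HY); pose proof (regularC_phi_comp Y HY).
  pose proof (regularC_theta_comp W HW); pose proof (regularC_phi_comp W HW).
  assert (Part : forall part, part = Re \/ part = Im ->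
    m * rect_integral (fun t p => part (gmet (comps X) (comps W) t p) * sin t)
    + l * rect_integral (fun t p => part (gmet (comps Y) (comps W) t p) * sin t) =
    rect_integral (fun t p => part (gmet (comps (vlin m l X Y)) (comps W) t p) * sin t)).
  { intros part Hpart.
    rewrite (rect_integral_chart_ext (fun t p => part (gmet (comps X) (comps W) t p) * sin t)
      (fun t p => part (theta_comp X t p * theta_comp W t p
                        + phi_comp X t p * phi_comp W t p)%C * sin t)),
      (rect_integral_chart_ext (fun t p => part (gmet (comps Y) (comps W) t p) * sin t)
      (fun t p => part (theta_comp Y t p * theta_comp W t p
                        + phi_comp Y t p * phi_comp W t p)%C * sin t)), rect_integral_lin.
    - apply rect_integral_chart_ext; intros t p Ht.
      rewrite gmet_comps, theta_comp_vlin, phi_comp_vlin by assumption.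
      rewrite <- Rmult_assoc, <- Rmult_assoc, <- Rmult_plus_distr_r, <- part_lin by assumption.
      f_equal; f_equal; ring.
    - apply regular_mult; [apply regular_part; [assumption | regular_auto] | apply regular_sin1].
    - apply regular_mult; [apply regular_part; [assumption | regular_auto] | apply regular_sin1].
    - intros t p Ht; rewrite gmet_comps by assumption; reflexivity.
    - intros t p Ht; rewrite gmet_comps by assumption; reflexivity. }
  pose proof (Part Re (or_introl eq_refl)); pose proof (Part Im (or_intror eq_refl)).
  unfold ip, int_S2; complex_eq; unfold rect_integral, Re, Im in *; cbn [fst snd]; lra.
Qed.

Lemma coord_eq0_extend (G : pt -> C) : regularC (fun t p => G (sph t p)) ->
  (forall t p, 0 < t < PI -> 0 < p < 2 * PI -> G (sph t p) = RtoC 0) ->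
  forall t p, G (sph t p) = RtoC 0.
Proof.
  intros [A B] H0 t p; complex_eq;
    [ apply (sph_eq0_extend (fun q => Re (G q))) | apply (sph_eq0_extend (fun q => Im (G q))) ];
    try assumption; intros; rewrite H0; auto.
Qed.

Lemma vfield_eq0_of_ip_vconj D : smooth_vf D -> tangent D ->
  ip (comps D) (comps (vconj D)) = RtoC 0 ->
  forall t p, D (sph t p) = ((RtoC 0, RtoC 0), RtoC 0).
Proof.
  intros SD TD H0.
  pose proof (regularC_theta_comp D SD) as [T1 T2]; pose proof (regularC_phi_comp D SD) as [P1 P2].
  set (N := fun t p => Re (theta_comp D t p) * Re (theta_comp D t p)
                     + Im (theta_comp D t p) * Im (theta_comp D t p)
                     + Re (phi_comp D t p) * Re (phi_comp D t p)
                     + Im (phi_comp D t p) * Im (phi_comp D t p)).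
  assert (HN : forall t p, 0 < t < PI -> 0 < p < 2 * PI -> N t p = 0).
  { apply rect_integral_nonneg_eq0; [unfold N; regular_auto | intros; unfold N; nra |].
    etransitivity; [|exact (f_equal Re H0)].
    apply (rect_integral_chart_ext _ (fun t p => Re (gmet (comps D) (comps (vconj D)) t p) * sin t)).
    intros t p Ht; unfold N; rewrite gmet_comps, theta_comp_vconj, phi_comp_vconj by assumption.
    autorewrite with complex_parts; ring. }
  assert (Open : forall t p, 0 < t < PI -> 0 < p < 2 * PI -> D (sph t p) = ((RtoC 0, RtoC 0), RtoC 0)).
  { intros t p Ht Hp; specialize (HN t p Ht Hp); unfold N in HN.
    apply (frame_eq0 _ t p); [| |apply TD];
      [change (theta_comp D t p = RtoC 0) | change (phi_comp D t p = RtoC 0)];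
      complex_eq; nra. }
  intros t p.
  rewrite (surjective_pairing (D (sph t p))), (surjective_pairing (fst (D (sph t p)))).
  change (((cx (D (sph t p)), cy (D (sph t p))), cz (D (sph t p))) = ((RtoC 0, RtoC 0), RtoC 0)).
  rewrite (coord_eq0_extend (fun q => cx (D q))), (coord_eq0_extend (fun q => cy (D q))),
    (coord_eq0_extend (fun q => cz (D q)));
    first [ reflexivity
          | apply regularC_coord_x, SD | apply regularC_coord_y, SD | apply regularC_coord_z, SD
          | intros t' p' Ht' Hp'; rewrite Open; auto ].
Qed.

Lemma Cadd_eq0_l (a b : C) : (a + b)%C = RtoC 0 -> a = (- b)%C.
Proof. intros E; replace a with ((a + b) - b)%C by ring; rewrite E; ring. Qed.

Lemma vscale_of_vlin_eq0 m l X Y q : vlin m l X Y q = ((RtoC 0, RtoC 0), RtoC 0) ->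
  vscale (RtoC m) (X q) = vscale (RtoC (- l)) (Y q).
Proof.
  unfold vlin, vscale, cx, cy, cz; destruct (X q) as [[x1 x2] x3], (Y q) as [[y1 y2] y3].
  cbn [fst snd]; intros E.
  pose proof (f_equal (fun w => fst (fst w)) E) as E1; pose proof (f_equal (fun w => snd (fst w)) E) as E2;
  pose proof (f_equal snd E) as E3; cbn [fst snd] in E1, E2, E3.
  rewrite RtoC_opp, (Cadd_eq0_l _ _ E1), (Cadd_eq0_l _ _ E2), (Cadd_eq0_l _ _ E3).
  f_equal; [f_equal|]; ring.
Qed.

Theorem lemma5 (l k : nat) (hl : (1 <= l)%nat) (hk : (1 <= k)%nat)
  (f h : pt -> C) (u v : vfield)
  (hf : in_Y l f) (hh : in_Y k h)
  (hu : is_sgrad u f) (hv : is_sgrad v h)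
  (Buv Bvu : vfield) (hB1 : is_B u v Buv) (hB2 : is_B v u Bvu) :
  forall t p : R,
    vscale (RtoC (INR k * (INR k + 1))) (Buv (sph t p)) =
    vscale (RtoC (- (INR l * (INR l + 1)))) (Bvu (sph t p)).
Proof.
  set (lam := INR l * (INR l + 1)); set (mu := INR k * (INR k + 1)).
  destruct hB1 as [SB1 EB1], hB2 as [SB2 EB2].
  set (D := vlin mu lam Buv Bvu).
  assert (SD : in_SVect D) by (apply in_SVect_vlin; assumption).
  assert (SW : in_SVect (vconj D)) by (apply in_SVect_vconj, SD).
  assert (HD : ip (comps D) (comps (vconj D)) = RtoC 0).
  { unfold D; rewrite ip_vlin_l, EB1, EB2 by (apply SB1 || apply SB2 || apply SW).
    apply (ip_bracket_eigen l k f h u v); assumption. }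
  intros t p; apply vscale_of_vlin_eq0.
  apply (vfield_eq0_of_ip_vconj D); [apply SD | apply SD | exact HD].
Qed.
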